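(* Let $m\ge1$ and $p_1,\dots,p_m$ be distinct primes, and let $S=\{1\}\cup\{p_1,\dots,p_m\}\cup\{p_ip_j: 1\le i<j\le m\}$, so $|S|=\frac12(m^2+m+2)$. Then $[S]$ is invertible, $i_-([S])=m$ and $i_+([S])=1+\binom m2=\frac12(m^2-m+2)$.
   Context: The LCM matrix $[S]$ of $S=\{x_1,\dots,x_n\}$ has $(i,j)$ entry $\mathrm{lcm}(x_i,x_j)$; $i_+(M)$ and $i_-(M)$ denote the numbers of positive and negative eigenvalues (with multiplicity) of a real symmetric matrix $M$. *)

(* Matrices are taken with entries in algC (algebraic complex
   numbers, an algebraically closed num field containing the integers), so that
   the characteristic polynomial splits and eigenvalues (with multiplicity) are
   well defined. *)
From HB Require Import structures.
From mathcomp Require Import all_boot all_order all_algebra.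
From mathcomp Require Import algC.
Set Implicit Arguments. Unset Strict Implicit. Unset Printing Implicit Defensive.
Import Order.TTheory GRing.Theory Num.Theory.
Local Open Scope ring_scope.

Definition eigenvalues (n : nat) (M : 'M[algC]_n) : seq algC :=
  sval (closed_field_poly_normal (char_poly M)).

Definition ipos (n : nat) (M : 'M[algC]_n) : nat :=
  count (fun x => 0 < x) (eigenvalues M).
Definition ineg (n : nat) (M : 'M[algC]_n) : nat :=
  count (fun x => x < 0) (eigenvalues M).

Definition lcm_matrix (s : seq nat) : 'M[algC]_(size s) :=
  \matrix_(i < size s, j < size s) (lcmn (nth 0%N s i) (nth 0%N s j))%:R.

Definition S_seq (m : nat) (p : 'I_m -> nat) : seq nat :=
  1%N :: [seq p i | i <- enum 'I_m]
      ++ [seq (p ij.1 * p ij.2)%N | ij <- enum [pred ij : 'I_m * 'I_m | (val ij.1 < val ij.2)%N]].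

From HB Require Import structures.
From mathcomp Require Import all_boot all_order all_algebra.
From mathcomp Require Import algC zify sesquilinear spectral.

(* Write S as the image of the family of subsets X of {1..m} with |X| <= 2
   under X |-> p_X := prod_(i in X) p_i.  Since lcm(p_X, p_Y) = p_X p_Y / p_(X :&: Y)
   and, by Moebius inversion on the Boolean lattice,
   1 / p_K = sum_(D \subset K) w(D) with w(D) := prod_(i in D) (1/p_i - 1),
   a family closed under subsets gives the congruence [S] = B^* diag(w) B, where
   B_(D,X) = [D \subset X] p_X.  Listing the sets by increasing size makes B
   triangular with nonzero diagonal, so [S] is invertible and, by Sylvester's law
   of inertia, has as many negative (positive) eigenvalues as w has negative
   (positive) values.  As w(D) has the sign of (-1)^|D|, these are the m
   singletons and the 1 + C(m,2) sets of even size. *)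

Set Implicit Arguments. Unset Strict Implicit. Unset Printing Implicit Defensive.
Import Order.TTheory GRing.Theory Num.Theory.

(** * Products of distinct primes *)

Section ProductsOfPrimes.
Variables (I : finType) (p : I -> nat).
Hypotheses (p_inj : injective p) (p_prime : forall i, prime (p i)).

Definition prodp (X : {set I}) : nat := \prod_(i in X) p i.

Lemma prodp_gt0 (X : {set I}) : (0 < prodp X)%N.
Proof. by apply: prodn_gt0 => i; exact: prime_gt0. Qed.

Lemma coprime_prodp (X Y : {set I}) : [disjoint X & Y] -> coprime (prodp X) (prodp Y).
Proof.
move=> XY; apply: (big_ind (coprime^~ _)) => [|a b|i iX]; first exact: coprime1n.
  by rewrite coprimeMl => -> ->.
apply: (big_ind (coprime _)) => [|a b|j jY]; first exact: coprimen1.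
  by rewrite coprimeMr => -> ->.
rewrite prime_coprime // dvdn_prime2 //; apply: contraTneq XY => /p_inj ij.
by apply/pred0Pn; exists i; rewrite /= iX ij.
Qed.

Lemma prodp_setID (X Y : {set I}) : prodp X = (prodp (X :&: Y) * prodp (X :\: Y))%N.
Proof. exact: big_setID. Qed.

Lemma gcdn_prodp (X Y : {set I}) : gcdn (prodp X) (prodp Y) = prodp (X :&: Y).
Proof.
rewrite (prodp_setID X Y) (prodp_setID Y X) setIC -muln_gcdr.
suff /eqP -> : coprime (prodp (X :\: Y)) (prodp (Y :\: X)) by rewrite muln1.
apply: coprime_prodp; rewrite disjoints_subset; apply/subsetP => i.
by rewrite !inE => /andP[/negbTE -> _]; rewrite andbF.
Qed.

Lemma prodp_inj : injective prodp.
Proof.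
suff sub X Y : prodp X = prodp Y -> X \subset Y.
  by move=> X Y XY; apply/eqP; rewrite eqEsubset !sub.
move=> XY; rewrite -setD_eq0; apply/eqP.
have : prodp (X :\: Y) = 1%N.
  apply/eqP; rewrite -(eqn_pmul2l (prodp_gt0 (X :&: Y))) muln1 -prodp_setID.
  by rewrite -gcdn_prodp XY gcdnn.
apply: contra_eq => /set0Pn [i iXY]; apply: contraTneq (p_prime i) => XY1.
have : (p i %| 1)%N by rewrite -XY1 /prodp (bigD1 i) //= dvdn_mulr.
by rewrite dvdn1 => /eqP ->.
Qed.

End ProductsOfPrimes.

(** * Subsets of size at most two *)

Lemma double_bin2 n : ('C(n, 2)).*2 = n * n.-1.
Proof. by rewrite bin2 halfK oddM; case: n => //= n; rewrite andNb subn0. Qed.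

Lemma sorted_leq_012 (T1 T2 : Type) (s1 : seq T1) (s2 : seq T2) :
  sorted leq (0 :: [seq 1 | _ <- s1] ++ [seq 2 | _ <- s2]).
Proof.
have path_const T x y (s : seq T) : x <= y -> path leq x [seq y | _ <- s].
  by move=> le_xy; elim: s x le_xy => //= a s IH x ->; apply: IH.
rewrite /= cat_path path_const //=; apply: path_const.
by case: s1 => [|a s1] //; elim: s1.
Qed.

Section SubsetsLe2.
Variable m : nat.

Definition ordered_pairs := enum [pred ij : 'I_m * 'I_m | val ij.1 < val ij.2].

Definition subsets_le2 : seq {set 'I_m} :=
  set0 :: [seq [set i] | i <- enum 'I_m] ++ [seq [set ij.1; ij.2] | ij <- ordered_pairs].

Lemma S_seq_subsets_le2 (p : 'I_m -> nat) : S_seq p = [seq prodp p X | X <- subsets_le2].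
Proof.
rewrite /S_seq /= map_cat -!map_comp /prodp big_set0; congr (_ :: _ ++ _).
  by apply: eq_map => i /=; rewrite big_set1.
apply/eq_in_map => -[a b]; rewrite mem_enum inE /= => lt_ab.
by rewrite big_setU1 /= ?big_set1 // inE neq_ltn lt_ab.
Qed.

Lemma card_ordered_pair ij : ij \in ordered_pairs -> #|[set ij.1; ij.2]| = 2.
Proof. by case: ij => a b; rewrite mem_enum inE /= cards2 neq_ltn => ->. Qed.

Lemma mem_subsets_le2 D : (D \in subsets_le2) = (#|D| <= 2).
Proof.
apply/idP/idP.
  rewrite inE mem_cat => /or3P[/eqP->|/mapP[i _ ->]|/mapP[ij /card_ordered_pair c2 ->]].
  - by rewrite cards0.
  - by rewrite cards1.
  - by rewrite c2.
rewrite leq_eqVlt ltnS leq_eqVlt ltnS leqn0 inE mem_cat => /or3P[c2|c1|/eqP/cards0_eq->].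
- have /cards2P [a [b [neq_ab ->]]] := c2; apply/orP; right; apply/orP; right.
  case: (ltngtP a b) => [lt_ab|lt_ba|eq_ab].
  + by apply/mapP; exists (a, b); rewrite // mem_enum inE.
  + by apply/mapP; exists (b, a); rewrite /= ?mem_enum ?inE // setUC.
  + by rewrite (val_inj eq_ab) eqxx in neq_ab.
- by have /cards1P [a ->] := c1; rewrite map_f ?mem_enum ?orbT.
- by rewrite eqxx.
Qed.

Lemma subsets_le2_down (K D : {set 'I_m}) :
  K \in subsets_le2 -> D \subset K -> D \in subsets_le2.
Proof. by rewrite !mem_subsets_le2 => K_le2 /subset_leq_card /leq_trans; apply. Qed.

Lemma subsets_le2_uniq : uniq subsets_le2.
Proof.
have card_eq (A B : {set 'I_m}) : A = B -> #|A| = #|B| by move->.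
rewrite /subsets_le2 cons_uniq cat_uniq mem_cat negb_or.
rewrite map_inj_uniq ?enum_uniq; last exact: set1_inj.
apply/and4P; split => //; first (apply/andP; split).
- by apply/mapP => -[i _ /card_eq]; rewrite cards0 cards1.
- by apply/mapP => -[ij /card_ordered_pair + /card_eq]; rewrite cards0 => ->.
- apply/hasPn => _ /mapP[ij ij_in ->]; apply/mapP => -[i _ /card_eq].
  by rewrite card_ordered_pair // cards1.
rewrite map_inj_in_uniq ?enum_uniq // => -[a b] [c d].
rewrite !mem_enum !inE /= => lt_ab lt_cd /setP eq_abcd.
have := eq_abcd a; have := eq_abcd b; have := eq_abcd c; rewrite !inE !eqxx ?orbT /=.
move=> /orP[] /eqP c_ab /esym/orP[] /eqP b_cd /esym/orP[] /eqP a_cd;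
  by subst; rewrite // in lt_ab lt_cd *; exfalso; lia.
Qed.

Lemma subsets_le2_sorted : sorted leq [seq #|X| | X : {set 'I_m} <- subsets_le2].
Proof.
rewrite /subsets_le2 map_cons map_cat cards0 -!map_comp.
rewrite (@eq_map _ _ _ (fun=> 1)) => [|i /=]; last exact: cards1.
rewrite (@eq_in_map _ _ _ (fun=> 2) ordered_pairs).1 => [|ij /card_ordered_pair //].
exact: sorted_leq_012.
Qed.

Lemma count_card_subsets_le2 k : k <= 2 ->
  count (fun D : {set 'I_m} => #|D| == k) subsets_le2 = 'C(m, k).
Proof.
move=> le_k2; rewrite -size_filter -[m in 'C(m, _)]card_ord -card_draws cardE.
apply/perm_size/uniq_perm; rewrite ?enum_uniq ?filter_uniq ?subsets_le2_uniq // => D.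
rewrite mem_filter mem_subsets_le2 mem_enum inE.
by case: eqP => // ->.
Qed.

Lemma count_odd_subsets_le2 : count (fun D : {set 'I_m} => odd #|D|) subsets_le2 = m.
Proof.
rewrite -[RHS]bin1 -count_card_subsets_le2 //; apply: eq_in_count => D.
by rewrite mem_subsets_le2; case: #|D| => [|[|[|c]]].
Qed.

Lemma count_even_subsets_le2 :
  count (fun D : {set 'I_m} => ~~ odd #|D|) subsets_le2 = 1 + 'C(m, 2).
Proof.
transitivity (count (fun D : {set 'I_m} => #|D| == 0) subsets_le2 +
              count (fun D : {set 'I_m} => #|D| == 2) subsets_le2); last first.
  by rewrite !count_card_subsets_le2 // bin0.
rewrite -count_predUI (@eq_count _ (predI _ _) pred0) ?count_pred0 ?addn0 => [|D]; last first.
  by rewrite /= andbC; case: eqP => // ->.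
by apply: eq_in_count => D; rewrite mem_subsets_le2 /=; case: #|D| => [|[|[|c]]].
Qed.

End SubsetsLe2.

Local Open Scope ring_scope.
Local Open Scope sesquilinear_scope.

(** * Sylvester's law of inertia *)

Lemma char_poly_similar (R : comUnitRingType) n (P A : 'M[R]_n) : P \in unitmx ->
  char_poly (invmx P *m A *m P) = char_poly A.
Proof.
move=> uP; rewrite /char_poly /char_poly_mx.
set Q := map_mx polyC P; set Qi := map_mx polyC (invmx P).
have QiQ : Qi *m Q = 1%:M by rewrite -map_mxM mulVmx // map_mx1.
have -> : 'X%:M - map_mx polyC (invmx P *m A *m P)
        = Qi *m ('X%:M - map_mx polyC A) *m Q.
  by rewrite !map_mxM mulmxBr mulmxBl mul_mx_scalar -scalemxAl QiQ scalemx1.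
by rewrite !det_mulmx mulrC mulrA -det_mulmx (mulmx1C QiQ) det1 mul1r.
Qed.

Lemma eigenvalues_similar_diag n (P A : 'M[algC]_n) (d : 'rV_n) :
  P \in unitmx -> A = invmx P *m diag_mx d *m P ->
  perm_eq (eigenvalues A) [seq d 0 i | i <- enum 'I_n].
Proof.
move=> uP eA; rewrite /eigenvalues; case: closed_field_poly_normal => r /= Er.
apply: prod_XsubC_eq; rewrite -[LHS]scale1r -(monicP (char_poly_monic A)) -Er.
rewrite eA char_poly_similar // char_poly_trig ?diag_mx_is_trig // big_map big_enum.
by apply: eq_bigr => i _; rewrite mxE eqxx mulr1n.
Qed.

Lemma count_map_row n (d : 'rV[algC]_n) (a : pred algC) :
  count a [seq d 0 i | i <- enum 'I_n] = #|[set i | a (d 0 i)]|.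
Proof.
rewrite count_map cardE size_filter /enum_mem -enumT /= filter_predT.
by apply: eq_count => i; rewrite !inE.
Qed.

Section DiagonalForm.
Variables (R : numDomainType) (n : nat) (d y : 'rV[R]_n) (A : {set 'I_n}).

Lemma diag_form_lt0 : y != 0 -> (forall i, i \notin A -> y 0 i = 0) ->
  (forall i, i \in A -> d 0 i < 0) -> \sum_i d 0 i * `|y 0 i| ^+ 2 < 0.
Proof.
move=> y_nz y_out d_neg; rewrite -oppr_gt0 -sumrN.
have [j yj_nz] : exists j, y 0 j != 0.
  apply/existsP; apply: contraR y_nz; rewrite negb_exists => /forallP y0.
  by apply/eqP/rowP => j; rewrite mxE; apply/eqP/negPn/y0.
have jA : j \in A by apply: contraNT yj_nz => /y_out ->.
rewrite (bigD1 j) //= -mulNr ltr_wpDr ?mulr_gt0 ?exprn_gt0 ?normr_gt0 ?oppr_gt0 ?d_neg //.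
apply: sumr_ge0 => i _; have [iA|/y_out->] := boolP (i \in A).
  by rewrite -mulNr mulr_ge0 ?exprn_ge0 // oppr_ge0 ltW ?d_neg.
by rewrite normr0 expr0n mulr0 oppr0.
Qed.

Lemma diag_form_ge0 : (forall i, i \in A -> y 0 i = 0) ->
  (forall i, i \notin A -> 0 <= d 0 i) -> 0 <= \sum_i d 0 i * `|y 0 i| ^+ 2.
Proof.
move=> y_in d_nneg; apply: sumr_ge0 => i _; have [/y_in->|/d_nneg d_ge0] := boolP (i \in A).
  by rewrite normr0 expr0n mulr0.
by rewrite mulr_ge0 ?exprn_ge0.
Qed.

End DiagonalForm.

Lemma congr_diag_form (C : numClosedFieldType) n (B : 'M[C]_n) d (v : 'rV_n) :
  (v *m (B^t* *m diag_mx d *m B) *m v^t*) 0 0 =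
    \sum_i d 0 i * `|(v *m B^t*) 0 i| ^+ 2.
Proof.
rewrite !mulmxA -[_ *m B *m _]mulmxA -[B *m v^t*]trmxCK trmx_mul map_mxM trmxCK.
by rewrite mul_mx_diag !mxE; apply: eq_bigr => i _; rewrite !mxE normCK mulrCA mulrA.
Qed.

Section SelectionMatrix.
Variables (F : fieldType) (n : nat) (A : {set 'I_n}).

Definition selmx : 'M[F]_(#|A|, n) := \matrix_(j, i) (i == enum_val j)%:R.

Lemma mxrank_selmx : \rank selmx = #|A|.
Proof.
apply/eqP; rewrite eqn_leq rank_leq_row -{1}(mxrank1 F #|A|).
have <- : selmx *m selmx^T = 1%:M.
  apply/matrixP => j k; rewrite !mxE (bigD1 (enum_val j)) //= big1 ?addr0.
    by rewrite !mxE eqxx (inj_eq enum_val_inj) mul1r eq_sym.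
  by move=> i /negbTE ij; rewrite !mxE ij mul0r.
exact: mxrankM_maxl.
Qed.

Lemma mul_selmx_notin (x : 'rV_#|A|) i : i \notin A -> (x *m selmx) 0 i = 0.
Proof.
move=> iA; rewrite !mxE big1 // => j _; rewrite !mxE.
by case: eqP => [ij|]; [move: iA; rewrite ij enum_valP | rewrite mulr0].
Qed.

Lemma mul_trmx_selmx_eq0 (y : 'rV_n) i : y *m selmx^T = 0 -> i \in A -> y 0 i = 0.
Proof.
move=> /rowP y0 iA; have := y0 (enum_rank_in iA i).
rewrite !mxE (bigD1 i) //= big1 ?addr0 => [|k /negbTE ki].
  by rewrite !mxE enum_rankK_in // eqxx mulr1.
by rewrite !mxE enum_rankK_in // ki mulr0.
Qed.

End SelectionMatrix.

Lemma capmx_rowV_neq0 (F : fieldType) n p q (U : 'M[F]_(p, n)) (V : 'M[F]_(q, n)) :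
  (n < \rank U + \rank V)%N ->
  exists2 v : 'rV_n, v != 0 & (v <= U)%MS /\ (v <= V)%MS.
Proof.
move=> ltn_rk; have : (U :&: V)%MS != 0.
  rewrite -mxrank_eq0 -lt0n; have := mxrank_sum_cap U V; have := rank_leq_col (U + V)%MS.
  by move: ltn_rk; lia.
case/rowV0Pn => v vUV v_nz; exists v => //.
by split; apply: submx_trans vUV _; [exact: capmxSl | exact: capmxSr].
Qed.

Lemma card_neg_congr_le n (C1 C2 : 'M[algC]_n) (d1 d2 : 'rV_n) :
  C1 \in unitmx -> (forall i, d2 0 i \is Num.real) ->
  C1^t* *m diag_mx d1 *m C1 = C2^t* *m diag_mx d2 *m C2 ->
  (#|[set i | (d1 0 i < 0)%R]| <= #|[set i | (d2 0 i < 0)%R]|)%N.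
Proof.
move=> C1_unit d2_real eqC; set A1 := [set i | _]; set A2 := [set i | _].
rewrite leqNgt; apply/negP => ltA.
have C1t_unit : C1^t* \in unitmx by rewrite map_unitmx unitmx_tr.
(* U1: the v whose coordinates v C1^* vanish off A1, so that the form is negative
   on U1 \ 0; U2: the v whose coordinates v C2^* vanish on A2, so that the form is
   nonnegative on U2.  Their dimensions force a common nonzero vector. *)
pose U1 := selmx algC A1 *m invmx (C1^t*).
pose U2 := kermx (C2^t* *m (selmx algC A2)^T).
have rkU1 : \rank U1 = #|A1|.
  by rewrite mxrankMfree ?mxrank_selmx // row_free_unit unitmx_inv.
have rkU2 : (n - #|A2| <= \rank U2)%N.
  rewrite mxrank_ker leq_sub2l //; apply: leq_trans (mxrankM_maxr _ _) _.
  by rewrite mxrank_tr mxrank_selmx.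
have [v v_nz [vU1 vU2]] : exists2 v : 'rV_n, v != 0 & (v <= U1)%MS /\ (v <= U2)%MS.
  apply: capmx_rowV_neq0; rewrite rkU1; apply: leq_trans (leq_add (leqnn _) rkU2).
  by move: ltA (max_card A2); rewrite card_ord; lia.
have form_lt0 : (v *m (C1^t* *m diag_mx d1 *m C1) *m v^t*) 0 0 < 0.
  have [x vE] := submxP vU1.
  have yE : v *m C1^t* = x *m selmx algC A1 by rewrite vE mulmxA mulmxKV.
  rewrite congr_diag_form; apply: (diag_form_lt0 (A := A1)) => [||i]; last by rewrite inE.
    by apply: contraNneq v_nz => /(canRL (mulmxK C1t_unit)) ->; rewrite mul0mx.
  by move=> i iA1; rewrite yE mul_selmx_notin.
have form_ge0 : 0 <= (v *m (C2^t* *m diag_mx d2 *m C2) *m v^t*) 0 0.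
  rewrite congr_diag_form; apply: (diag_form_ge0 (A := A2)) => i.
    by move: vU2; rewrite sub_kermx mulmxA => /eqP /mul_trmx_selmx_eq0; apply.
  by rewrite inE real_leNgt ?real0.
by move: form_lt0; rewrite eqC => /(le_lt_trans form_ge0); rewrite ltxx.
Qed.

Lemma card_neg_congr n (C1 C2 : 'M[algC]_n) (d1 d2 : 'rV_n) :
  C1 \in unitmx -> C2 \in unitmx ->
  (forall i, d1 0 i \is Num.real) -> (forall i, d2 0 i \is Num.real) ->
  C1^t* *m diag_mx d1 *m C1 = C2^t* *m diag_mx d2 *m C2 ->
  #|[set i | d1 0 i < 0]| = #|[set i | d2 0 i < 0]|.
Proof.
move=> C1_unit C2_unit d1_real d2_real eqC.
by apply/eqP; rewrite eqn_leq !(card_neg_congr_le _ _ eqC) ?(card_neg_congr_le _ _ (esym eqC)).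
Qed.

Lemma inertia_congr_diag n (A C : 'M[algC]_n) (d : 'rV_n) :
  A \is hermsymmx -> C \in unitmx -> (forall i, d 0 i \is Num.real) ->
  A = C^t* *m diag_mx d *m C ->
  ineg A = #|[set i | d 0 i < 0]| /\ ipos A = #|[set i | 0 < d 0 i]|.
Proof.
move=> A_herm C_unit d_real AE.
have /hermitian_normalmx/orthomx_spectralP AP := A_herm.
set P := spectralmx A in AP; set sp := spectral_diag A in AP.
have P_unit : P \in unitmx by exact: spectral_unit.
have sp_real i : sp 0 i \is Num.real.
  by have /mxOverP := hermitian_spectral_diag_real A_herm; apply.
have eqPC : P^t* *m diag_mx sp *m P = C^t* *m diag_mx d *m C.
  by rewrite -invmx_unitary ?spectral_unitarymx // -AP.
have eqPCN : P^t* *m diag_mx (- sp) *m P = C^t* *m diag_mx (- d) *m C.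
  by rewrite !raddfN /= !mulNmx eqPC.
have setN (e : 'rV[algC]_n) : [set i | 0 < e 0 i] = [set i | (- e) 0 i < 0].
  by apply/setP => i; rewrite !inE mxE oppr_lt0.
have spN_real i : (- sp) 0 i \is Num.real by rewrite mxE realN.
have dN_real i : (- d) 0 i \is Num.real by rewrite mxE realN.
rewrite /ineg /ipos !(permP (eigenvalues_similar_diag P_unit AP)) !count_map_row !setN.
by split; apply: card_neg_congr P_unit C_unit _ _ _.
Qed.

(** * LCM matrices of downward closed families of squarefree numbers *)

Lemma sum_subset_prod (R : comNzRingType) (I : finType) (K : {set I}) (f : I -> R) :
  \sum_(D : {set I} | D \subset K) \prod_(i in D) f i = \prod_(i in K) (1 + f i).
Proof.
pose F i := if i \in K then f i else 0.
rewrite [RHS]big_mkcond (eq_bigr (fun i => F i + 1)) => [|i _]; last first.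
  by rewrite /F; case: (i \in K); rewrite ?add0r // addrC.
rewrite bigA_distr big_mkcond /=; apply: eq_bigr => D _.
have [DK|/subsetPn [i iD iK]] := boolP (D \subset K).
  rewrite big_mkcond /=; apply: eq_bigr => i _; rewrite /F.
  by case: (boolP (i \in D)) => iD; rewrite ?(subsetP DK _ iD).
by rewrite (bigD1 i) //= iD /F (negbTE iK) mul0r.
Qed.

Lemma lcmn_prodp (I : finType) (p : I -> nat) (F : numFieldType) (X Y : {set I}) :
  injective p -> (forall i, prime (p i)) ->
  (lcmn (prodp p X) (prodp p Y))%:R =
    (prodp p X)%:R * (prodp p Y)%:R / (prodp p (X :&: Y))%:R :> F.
Proof.
move=> p_inj p_prime; rewrite -natrM -muln_lcm_gcd gcdn_prodp // natrM mulfK //.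
by rewrite pnatr_eq0 -lt0n prodp_gt0.
Qed.

Lemma lcm_matrix_herm (s : seq nat) : lcm_matrix s \is hermsymmx.
Proof.
apply: realsym_hermsym; last by apply/mxOverP => i j; rewrite mxE realn.
by apply/is_hermitianmxP; rewrite expr0 scale1r; apply/matrixP => i j; rewrite !mxE lcmnC.
Qed.

Section SquarefreeLcmMatrix.
Variables (I : finType) (p : I -> nat).
Hypotheses (p_inj : injective p) (p_prime : forall i, prime (p i)).

Definition lcm_weight (D : {set I}) : algC := \prod_(i in D) ((p i)%:R^-1 - 1).

Lemma lcm_weightE D :
  lcm_weight D = (-1) ^+ #|D| * \prod_(i in D) (1 - (p i)%:R^-1).
Proof. by rewrite -prodrN; apply: eq_bigr => i _; rewrite opprB. Qed.

Lemma prod_one_sub_inv_gt0 (D : {set I}) : 0 < \prod_(i in D) (1 - (p i)%:R^-1) :> algC.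
Proof.
apply: prodr_gt0 => i _; rewrite subr_gt0 invf_lt1 ?ltr0n ?prime_gt0 //.
by rewrite ltr1n prime_gt1.
Qed.

Lemma lcm_weight_lt0 D : (lcm_weight D < 0) = odd #|D|.
Proof.
have := prod_one_sub_inv_gt0 D; rewrite lcm_weightE -signr_odd.
by case: odd => pos; rewrite ?expr1 ?mulN1r ?oppr_lt0 // expr0 mul1r lt_gtF.
Qed.

Lemma lcm_weight_gt0 D : (0 < lcm_weight D) = ~~ odd #|D|.
Proof.
have := prod_one_sub_inv_gt0 D; rewrite lcm_weightE -signr_odd.
by case: odd => pos; rewrite ?expr0 ?mul1r // expr1 mulN1r oppr_gt0 lt_gtF.
Qed.

Lemma lcm_weight_neq0 D : lcm_weight D != 0.
Proof.
by rewrite lcm_weightE mulf_neq0 ?signr_eq0 // lt0r_neq0 ?prod_one_sub_inv_gt0.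
Qed.

Lemma lcm_weight_real D : lcm_weight D \is Num.real.
Proof.
by apply: rpred_prod => i _; rewrite rpredB ?rpredV ?realn ?real1.
Qed.

Variable Xs : seq {set I}.
Hypotheses (Xs_uniq : uniq Xs)
  (Xs_down : forall K D : {set I}, K \in Xs -> D \subset K -> D \in Xs)
  (Xs_sorted : sorted leq [seq #|X| | X : {set I} <- Xs]).

Lemma sum_lcm_weight K : K \in Xs ->
  \sum_(D <- Xs | D \subset K) lcm_weight D = (prodp p K)%:R^-1.
Proof.
move=> KXs; rewrite -big_filter big_uniq ?filter_uniq //.
transitivity (\sum_(D : {set I} | D \subset K) lcm_weight D).
  by apply: eq_bigl => D; rewrite mem_filter andb_idr // => /Xs_down; apply.
rewrite sum_subset_prod /prodp natr_prod -prodfV.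
by apply: eq_bigr => i _; rewrite addrC subrK.
Qed.

Local Notation s := [seq prodp p X | X <- Xs].
Local Notation n := (size s).

Definition nth_set (i : 'I_n) : {set I} := nth set0 Xs i.

Lemma nth_prodp (i : 'I_n) : nth 0%N s i = prodp p (nth_set i).
Proof. by rewrite (nth_map set0) // -(size_map (prodp p)). Qed.

Lemma big_nth_set (R : Type) (idx : R) (op : R -> R -> R) (P : pred {set I}) F :
  \big[op/idx]_(i < n | P (nth_set i)) F (nth_set i) = \big[op/idx]_(D <- Xs | P D) F D.
Proof.
rewrite /nth_set -(big_mkord (fun i => P (nth set0 Xs i)) (fun i => F (nth set0 Xs i))).
by rewrite size_map -big_nth.
Qed.

Lemma card_nth_set (P : pred {set I}) : #|[set i : 'I_n | P (nth_set i)]| = count P Xs.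
Proof.
rewrite -sum1_card -sum1_count -(@big_nth_set _ 0%N addn P (fun=> 1%N)).
by apply: eq_bigl => i; rewrite inE.
Qed.

Lemma nth_set_inj : injective nth_set.
Proof.
move=> i j /eqP; rewrite /nth_set nth_uniq // => [/eqP/val_inj //||];
  by rewrite -(size_map (prodp p)).
Qed.

Lemma card_nth_set_mono (i j : 'I_n) : (i <= j)%N -> (#|nth_set i| <= #|nth_set j|)%N.
Proof.
move=> le_ij; have := sorted_leq_nth leq_trans leqnn 0%N Xs_sorted.
rewrite size_map /nth_set -!(nth_map set0 0%N (fun X : {set I} => #|X|));
  rewrite -?(size_map (prodp p)) //.
by apply; rewrite ?inE -?(size_map (prodp p)).
Qed.

Lemma nth_set_in i : nth_set i \in Xs.
Proof. by rewrite mem_nth // -(size_map (prodp p)). Qed.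

Definition lcm_factor_mx : 'M[algC]_n :=
  \matrix_(d, x) ((nth_set d \subset nth_set x) * prodp p (nth_set x))%:R.

Definition lcm_weight_row : 'rV[algC]_n := \row_d lcm_weight (nth_set d).

(* Entrywise: lcm(p_X, p_Y) = p_X p_Y / p_(X :&: Y) = sum_(D \subset X :&: Y) p_X w(D) p_Y,
   where all these D lie in Xs because Xs is closed under subsets. *)
Lemma lcm_matrix_factor :
  lcm_matrix s = lcm_factor_mx^t* *m diag_mx lcm_weight_row *m lcm_factor_mx.
Proof.
apply/matrixP => x y; rewrite !mxE !nth_prodp lcmn_prodp // -sum_lcm_weight; last first.
  by apply: Xs_down (nth_set_in x) _; exact: subsetIl.
rewrite -big_nth_set mulr_sumr big_mkcond /=; apply: eq_bigr => d _.
rewrite mul_mx_diag !mxE conjC_nat subsetI.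
case: (nth_set d \subset nth_set x); case: (nth_set d \subset nth_set y);
  by rewrite /= ?mul0n ?mul1n ?mul0r ?mulr0 // mulrAC.
Qed.

Lemma lcm_factor_mx_unit : lcm_factor_mx \in unitmx.
Proof.
rewrite -unitmx_tr unitmxE det_trig; last first.
  apply/is_trig_mxP => i j lt_ij; rewrite !mxE.
  case: (boolP (nth_set j \subset nth_set i)) => // sub_ji.
  suff /nth_set_inj eq_ji : nth_set j = nth_set i by rewrite eq_ji ltnn in lt_ij.
  by apply/eqP; rewrite eqEcard sub_ji card_nth_set_mono // ltnW.
rewrite unitfE; apply/prodf_neq0 => i _.
by rewrite !mxE subxx mul1n pnatr_eq0 -lt0n prodp_gt0.
Qed.

Lemma lcm_matrix_unit : lcm_matrix s \in unitmx.
Proof.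
rewrite lcm_matrix_factor !unitmx_mul lcm_factor_mx_unit map_unitmx unitmx_tr.
rewrite lcm_factor_mx_unit unitmxE det_diag unitfE /= andbT.
by apply/prodf_neq0 => i _; rewrite mxE lcm_weight_neq0.
Qed.

Lemma lcm_matrix_inertia :
  ineg (lcm_matrix s) = count (fun X : {set I} => odd #|X|) Xs /\
  ipos (lcm_matrix s) = count (fun X : {set I} => ~~ odd #|X|) Xs.
Proof.
have weight_real i : lcm_weight_row 0 i \is Num.real by rewrite mxE lcm_weight_real.
have [-> ->] := inertia_congr_diag (lcm_matrix_herm s) lcm_factor_mx_unit weight_real
  lcm_matrix_factor.
rewrite -!card_nth_set; split; apply: eq_card => i.
  by rewrite !inE mxE lcm_weight_lt0.
by rewrite !inE mxE lcm_weight_gt0.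
Qed.

End SquarefreeLcmMatrix.

Theorem mainTheorem16 (m : nat) (p : 'I_m -> nat) :
  (1 <= m)%N -> injective p -> (forall i, prime (p i)) ->
  let s := S_seq p in
  [/\ uniq s,
      (size s).*2 = (m ^ 2 + m + 2)%N,
      lcm_matrix s \in unitmx,
      ineg (lcm_matrix s) = m
    & ipos (lcm_matrix s) = (1 + 'C(m, 2))%N /\ (ipos (lcm_matrix s)).*2 = (m ^ 2 - m + 2)%N].
Proof.
move=> _ p_inj p_prime s; rewrite {}/s S_seq_subsets_le2.
have Xs_uniq := subsets_le2_uniq m; have Xs_down := @subsets_le2_down m.
have Xs_sorted := subsets_le2_sorted m.
have [-> ->] := lcm_matrix_inertia p_inj p_prime Xs_uniq Xs_down Xs_sorted.
rewrite count_odd_subsets_le2 count_even_subsets_le2.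
have double_pos : ((1 + 'C(m, 2)).*2 = m ^ 2 - m + 2)%N.
  by rewrite doubleD double_bin2; case: (m) => [|k] //; lia.
split => //.
- by rewrite map_inj_uniq //; apply: prodp_inj.
- rewrite size_map -(count_predC (fun D : {set 'I_m} => odd #|D|)).
  rewrite count_odd_subsets_le2 count_even_subsets_le2 doubleD double_pos.
  by case: (m) => [|k] //; lia.
- exact: lcm_matrix_unit Xs_uniq Xs_down Xs_sorted.
Qed.
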